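(* Consider a market with $n$ sellers of true costs $c_1,\dots,c_n\in[0,1]$ and $n$ buyers of true values $v_1,\dots,v_n\in[0,1]$. Suppose reals $\underline c_i\le c_i\le\bar c_i$ and $\underline v_j\le v_j\le\bar v_j$ are known with $\bar c_i-\underline c_i\le\delta$ and $\bar v_j-\underline v_j\le\delta$ for all $i,j$. Let $M$ be a matching maximizing gains-from-trade when sellers have costs $\bar c_i$ and buyers have values $\underline v_j$, let $S_1$, $B_1$ be the sellers and buyers matched in $M$, and post the segmented-price mechanism: price $\max_{i\in S_1}\bar c_i$ to sellers in $S_1$ and price $0$ to the other sellers; price $\min_{j\in B_1}\underline v_j$ to buyers in $B_1$ and price $1$ to the other buyers. Then the realized gains-from-trade (under any maximum-cardinality matching of the accepting traders) is at least $\mathrm{GFT}^\star-2n\delta$, where $\mathrm{GFT}^\star$ is the optimal gains-from-trade for the true costs and values.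
   Context: A seller accepts a price $p$ iff $p\ge$ its cost; a buyer accepts price $q$ iff $q\le$ its value (ties in favour of accepting). A maximum-cardinality matching between accepting sellers and accepting buyers is formed, and the GFT of a matching $M$ is $\sum_{(i,j)\in M}(v_j-c_i)$. $\mathrm{GFT}^\star$ is the maximum GFT over all matchings between sellers and buyers. A segmented-price mechanism partitions sellers into at most two groups and buyers into at most two groups and posts one price per group. *)

From mathcomp Require Import all_boot all_order all_algebra.
Set Implicit Arguments. Unset Strict Implicit. Unset Printing Implicit Defensive.
Import Order.TTheory GRing.Theory Num.Theory.
Local Open Scope ring_scope.

Section Market.
Variables (R : realFieldType) (n : nat).
Implicit Types (c v p q : 'I_n -> R) (M : {set 'I_n * 'I_n}).

(* A matching between sellers ('I_n, first component) and buyers ('I_n,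
   second component): a set of seller-buyer pairs in which each seller and
   each buyer occurs at most once. *)
Definition matching M : bool :=
  [forall x in M, forall y in M, (x.1 == y.1) == (x.2 == y.2)].

Definition GFT c v M : R := \sum_(x in M) (v x.2 - c x.1).

(* Maximum GFT over all matchings (the empty matching gives 0, so the
   default value 0 of the iterated max is harmless). *)
Definition GFTstar c v : R :=
  \big[Num.max/0]_(M : {set 'I_n * 'I_n} | matching M) GFT c v M.

Definition matched_sellers M : {set 'I_n} := [set x.1 | x in M].
Definition matched_buyers M : {set 'I_n} := [set x.2 | x in M].

Definition seller_price ch M (i : 'I_n) : R :=
  if i \in matched_sellers M
  then \big[Num.max/0]_(k in matched_sellers M) ch k else 0.
Definition buyer_price vl M (j : 'I_n) : R :=
  if j \in matched_buyers M
  then \big[Num.min/1]_(k in matched_buyers M) vl k else 1.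

Definition seller_accepts c p (i : 'I_n) : bool := c i <= p i.
Definition buyer_accepts v q (j : 'I_n) : bool := q j <= v j.

Definition accepting_matching c v p q M : bool :=
  matching M && [forall x in M, seller_accepts c p x.1 && buyer_accepts v q x.2].

Definition realized_matching c v p q M : Prop :=
  accepting_matching c v p q M /\
  forall M', accepting_matching c v p q M' -> (#|M'| <= #|M|)%N.

End Market.

(* Perturbing costs and values by at most delta changes the gains of any
   matching by at most 2 delta per pair, so the optimum for the pessimistic
   bounds (ch, vl), attained by M, is within 2 n delta of the true optimum, and
   M only gains when evaluated at the true (c, v).  The segmented prices are
   accepted by every pair of M, so a realized matching Mr has at least #|M|
   pairs; a seller of Mr outside S1 faces price 0 and hence has cost 0, and a
   buyer of Mr outside B1 faces price 1 and hence has value 1.  Comparing the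
   two sums therefore gives GFT c v M <= GFT c v Mr. *)
From mathcomp Require Import all_boot all_order all_algebra.
From mathcomp Require Import ring lra.
Import Order.TTheory GRing.Theory Num.Theory.
Local Open Scope ring_scope.
Set Implicit Arguments. Unset Strict Implicit.

Section Matchings.
Variables (R : realFieldType) (n : nat).
Implicit Types (c v : 'I_n -> R) (M : {set 'I_n * 'I_n}).

Lemma matching_fst_inj M : matching M -> {in M &, injective (fun x => x.1)}.
Proof.
move=> /forall_inP hM [a b] [a' b'] /hM /forall_inP h1 /h1 /= /eqP h2 ea.
by subst a'; move: h2; rewrite eqxx => /esym /eqP ->.
Qed.

Lemma matching_snd_inj M : matching M -> {in M &, injective (fun x => x.2)}.
Proof.
move=> /forall_inP hM [a b] [a' b'] /hM /forall_inP h1 /h1 /= /eqP h2 eb.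
by subst b'; move: h2; rewrite eqxx => /eqP ->.
Qed.

Lemma matching0 : matching (set0 : {set 'I_n * 'I_n}).
Proof. by apply/forall_inP => x; rewrite inE. Qed.

Lemma card_matching_le M : matching M -> (#|M| <= n)%N.
Proof.
move=> hM; rewrite -(card_in_imset (matching_fst_inj hM)).
by rewrite -[X in (_ <= X)%N](card_ord n) max_card.
Qed.

Lemma card_matched_buyers M : matching M -> #|matched_buyers M| = #|M|.
Proof. by move=> hM; rewrite card_in_imset //; exact: matching_snd_inj. Qed.

Lemma GFT_matched c v M : matching M ->
  GFT c v M = \sum_(j in matched_buyers M) v j - \sum_(i in matched_sellers M) c i.
Proof.
move=> hM; rewrite /GFT sumrB.
by rewrite (big_imset _ (matching_snd_inj hM)) (big_imset _ (matching_fst_inj hM)).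
Qed.

Lemma ler_GFT c v c' v' M :
  (forall i, c i <= c' i) -> (forall j, v' j <= v j) -> GFT c' v' M <= GFT c v M.
Proof. by move=> hc hv; apply: ler_sum => x _; apply: lerB. Qed.

Lemma GFT_le_GFTstar c v M : matching M -> GFT c v M <= GFTstar c v.
Proof. exact: (le_bigmax_cond _ (P := fun M => matching M)). Qed.

Lemma GFTstar_ge0 c v : 0 <= GFTstar c v.
Proof. exact: bigmax_ge_id. Qed.

Lemma ler_sum_support (g : 'I_n -> R) (T S : {set 'I_n}) :
  (forall x, 0 <= g x) -> (forall x, x \in T -> x \notin S -> g x = 0) ->
  \sum_(x in T) g x <= \sum_(x in S) g x.
Proof.
move=> g0 gz; rewrite (big_setID S) [X in _ <= X](big_setID T) /=.
rewrite [X in _ + X]big1 ?addr0 => [|x]; last first.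
  by rewrite in_setD => /andP[xS xT]; exact: gz.
by rewrite setIC lerDl sumr_ge0.
Qed.

Section Perturbation.
Variables (c v ch vl : 'I_n -> R) (delta : R).
Hypotheses (hc : forall i, c i <= ch i) (dc : forall i, ch i - c i <= delta).
Hypothesis dv : forall j, v j - vl j <= delta.

Lemma GFT_perturb M : GFT c v M <= GFT ch vl M + 2%:R * #|M|%:R * delta.
Proof.
have -> : 2%:R * #|M|%:R * delta = \sum_(x in M) 2%:R * delta :> R.
  by rewrite sumr_const -mulr_natr; ring.
rewrite /GFT -big_split /=; apply: ler_sum => x _.
by have := dc x.1; have := dv x.2; lra.
Qed.

Lemma card_matching_scale_le M :
  matching M -> #|M|%:R * delta <= n%:R * delta.
Proof.
move=> hM; have [n0|n_gt0] := posnP n.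
  have : (#|M| <= 0)%N by apply: leq_trans (card_matching_le hM) _; rewrite n0.
  by rewrite leqn0 => /eqP ->; rewrite n0.
have delta_ge0 : 0 <= delta by apply: le_trans (dc (Ordinal n_gt0)); rewrite subr_ge0.
by rewrite ler_wpM2r // ler_nat card_matching_le.
Qed.

Lemma GFTstar_perturb : GFTstar c v <= GFTstar ch vl + 2%:R * n%:R * delta.
Proof.
have shift_ge0 : 0 <= n%:R * delta.
  by have := card_matching_scale_le matching0; rewrite cards0 mul0r.
apply: bigmax_le => [|M hM].
  by apply: addr_ge0; rewrite ?GFTstar_ge0 // -mulrA mulr_ge0.
apply: le_trans (GFT_perturb M) _; rewrite -!mulrA.
by apply: lerD; [exact: GFT_le_GFTstar | rewrite ler_pM2l ?card_matching_scale_le].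
Qed.

End Perturbation.

Section SegmentedPrices.
Variables (c v ch vl : 'I_n -> R) (M : {set 'I_n * 'I_n}).
Local Notation p := (seller_price ch M).
Local Notation q := (buyer_price vl M).

Lemma segmented_prices_accept :
  (forall i, c i <= ch i) -> (forall j, vl j <= v j) ->
  matching M -> accepting_matching c v p q M.
Proof.
move=> hc hv hM; rewrite /accepting_matching hM; apply/forall_inP => x xM.
have x1 : x.1 \in matched_sellers M by apply/imsetP; exists x.
have x2 : x.2 \in matched_buyers M by apply/imsetP; exists x.
rewrite /seller_accepts /buyer_accepts /seller_price /buyer_price x1 x2.
apply/andP; split.
  apply: le_trans (hc _) _.
  exact: (le_bigmax_cond _ (P := fun k => k \in matched_sellers M)).
apply: le_trans (hv _).
exact: (bigmin_le_cond _ (P := fun k => k \in matched_buyers M)).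
Qed.

Variable Mr : {set 'I_n * 'I_n}.
Hypotheses (c01 : forall i, 0 <= c i <= 1) (v01 : forall j, 0 <= v j <= 1).
Hypothesis accMr : accepting_matching c v p q Mr.

Lemma unmatched_seller_cost0 i :
  i \in matched_sellers Mr -> i \notin matched_sellers M -> c i = 0.
Proof.
case/imsetP=> x xMr -> xS; case/andP: accMr => _ /forall_inP /(_ x xMr) /andP[].
rewrite /seller_accepts /seller_price (negbTE xS) => c_le0 _.
by apply/eqP; rewrite eq_le c_le0; case/andP: (c01 x.1).
Qed.

Lemma unmatched_buyer_value1 j :
  j \in matched_buyers Mr -> j \notin matched_buyers M -> v j = 1.
Proof.
case/imsetP=> x xMr -> xB; case/andP: accMr => _ /forall_inP /(_ x xMr) /andP[_].
rewrite /buyer_accepts /buyer_price (negbTE xB) => v_ge1.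
by apply/eqP; rewrite eq_le v_ge1 andbT; case/andP: (v01 x.2).
Qed.

Lemma GFT_realized_ge : matching M -> (#|M| <= #|Mr|)%N -> GFT c v M <= GFT c v Mr.
Proof.
move=> hM cardM; have hMr : matching Mr by case/andP: accMr.
have sellers : \sum_(i in matched_sellers Mr) c i <= \sum_(i in matched_sellers M) c i.
  apply: ler_sum_support; last exact: unmatched_seller_cost0.
  by move=> i; case/andP: (c01 i).
have buyers : \sum_(j in matched_buyers Mr) (1 - v j)
              <= \sum_(j in matched_buyers M) (1 - v j).
  apply: ler_sum_support => [j|j jr jM]; first by case/andP: (v01 j); rewrite subr_ge0.
  by rewrite unmatched_buyer_value1 ?subrr.
move: buyers; rewrite !sumrB !sumr_const !card_matched_buyers //.
rewrite (GFT_matched _ _ hM) (GFT_matched _ _ hMr).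
have : #|M|%:R <= #|Mr|%:R :> R by rewrite ler_nat.
lra.
Qed.

End SegmentedPrices.

End Matchings.

Theorem lemma5p6 (R : realFieldType) (n : nat) (c v cl ch vl vh : 'I_n -> R)
    (delta : R) (M Mr : {set 'I_n * 'I_n}) :
  (forall i, 0 <= c i <= 1) -> (forall j, 0 <= v j <= 1) ->
  (forall i, cl i <= c i <= ch i) -> (forall j, vl j <= v j <= vh j) ->
  (forall i, ch i - cl i <= delta) -> (forall j, vh j - vl j <= delta) ->
  matching M -> GFT ch vl M = GFTstar ch vl ->
  realized_matching c v (seller_price ch M) (buyer_price vl M) Mr ->
  GFTstar c v - 2%:R * n%:R * delta <= GFT c v Mr.
Proof.
move=> c01 v01 hc hv dc dv hM optM [accMr maxMr].
have c_le_ch i : c i <= ch i by case/andP: (hc i).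
have vl_le_v j : vl j <= v j by case/andP: (hv j).
have dc' i : ch i - c i <= delta.
  by apply: le_trans (dc i); case/andP: (hc i) => ? _; lra.
have dv' j : v j - vl j <= delta.
  by apply: le_trans (dv j); case/andP: (hv j) => _ ?; lra.
have opt_gap := GFTstar_perturb c_le_ch dc' dv'.
have M_true := ler_GFT M c_le_ch vl_le_v.
have M_le_Mr := GFT_realized_ge c01 v01 accMr hM
  (maxMr _ (segmented_prices_accept c_le_ch vl_le_v hM)).
by rewrite optM in M_true; lra.
Qed.
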